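(* Let $F$ be an infinite field, $n\ge3$, and let $z_1,\dots,z_k$ be distinct variables of degrees $g_1,\dots,g_k\in\{1,\dots,n-1\}$ with $g_1+\dots+g_k\le n-1$, and $y_1,y_2,\dots$ distinct variables of degree $0$. Then the commutators $$[z_1,y_1,\dots,y_{t_1},z_2,y_{t_1+1},\dots,y_{t_1+t_2},z_3,\dots,z_k,y_{t_1+\dots+t_{k-1}+1},\dots,y_{t_1+\dots+t_k}]$$ ($t_1,\dots,t_k\ge0$) are linearly independent modulo the $T_{\mathbb{Z}_n}$-ideal $I$ of graded identities of $UT_n(F)^{(-)}$.
   Context: $UT_n(F)^{(-)}$: $n\times n$ upper triangular matrices with bracket $[a,b]=ab-ba$ and canonical $\mathbb{Z}_n$-grading (degree-$k$ component spanned by $e_{ij}$, $j-i=k$); elements of $\mathbb{Z}_n\setminus\{0\}$ are identified with $1,\dots,n-1$. $I$ is the set of polynomials in the free $\mathbb{Z}_n$-graded Lie algebra vanishing on $UT_n(F)^{(-)}$ under degree-respecting substitutions. Commutators are left normed. *)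

From HB Require Import structures.
From mathcomp Require Import all_boot all_order all_algebra.
Set Implicit Arguments. Unset Strict Implicit. Unset Printing Implicit Defensive.
Import GRing.Theory.
Local Open Scope ring_scope.

Definition infinite_field (F : fieldType) : Prop :=
  forall s : seq F, exists x : F, x \notin s.

Definition lie_br (F : fieldType) (n : nat) (a b : 'M[F]_n) : 'M[F]_n :=
  a *m b - b *m a.

Definition lnc (F : fieldType) (n : nat) (s : seq 'M[F]_n) : 'M[F]_n :=
  foldl (@lie_br F n) (head 0 s) (behead s).

(* Homogeneous element of degree g (1 <= g <= n-1) of the canonical
   Z_n-grading of UT_n(F): supported on entries (r,c) with c - r = g. *)
Definition homog_deg (F : fieldType) (n g : nat) (A : 'M[F]_n) : Prop :=
  forall r c : 'I_n, (c : nat) != (r + g)%N -> A r c = 0.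

Definition homog_deg0 (F : fieldType) (n : nat) (A : 'M[F]_n) : Prop :=
  forall r c : 'I_n, r != c -> A r c = 0.

(* Offset of the block of y's following z_{i}: t_1 + ... + t_{i-1}
   (0-based indexing: the y's after z_i are y_(off i), ..., y_(off i + t_i - 1)). *)
Definition yoff (k : nat) (t : {ffun 'I_k -> nat}) (i : 'I_k) : nat :=
  (\sum_(l < k | (l < i)%N) t l)%N.

Definition comm_word (F : fieldType) (n k : nat) (Z : 'I_k -> 'M[F]_n)
  (Y : nat -> 'M[F]_n) (t : {ffun 'I_k -> nat}) : seq 'M[F]_n :=
  flatten [seq Z i :: [seq Y (yoff t i + j)%N | j <- iota 0 (t i)] | i <- enum 'I_k].

Definition comm_eval (F : fieldType) (n k : nat) (Z : 'I_k -> 'M[F]_n)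
  (Y : nat -> 'M[F]_n) (t : {ffun 'I_k -> nat}) : 'M[F]_n :=
  lnc (comm_word Z Y t).

From HB Require Import structures.
From mathcomp Require Import all_boot all_order all_algebra.
Set Implicit Arguments.
Unset Strict Implicit.
Unset Printing Implicit Defensive.
Import GRing.Theory.
Local Open Scope ring_scope.

(* Substitute for z_i the matrix unit e_(p_i, p_(i+1)), where p_i = g_1 + ... +
   g_(i-1), and for every y_j the same diagonal matrix D = diag(0, d_1, ..., d_(n-1)).
   The commutator indexed by t then equals (prod_i d_(p_(i+1)) ^ t_i) e_(0, p_(k+1)).
   With d_r = x ^ (B ^ r) for B larger than all entries of the t's, that coefficient
   is the monomial x ^ (sum_i B ^ p_(i+1) * t_i), and uniqueness of base-B
   expansions makes these exponents pairwise distinct. A linear relation among the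
   commutators thus yields a polynomial in x vanishing on the infinite field F, so
   all of its coefficients are zero. *)

Lemma infinite_field_uniq_seq (F : fieldType) (m : nat) :
  infinite_field F -> exists s : seq F, uniq s /\ size s = m.
Proof.
move=> hF; elim: m => [|m [s [us ss]]]; first by exists [::].
by have [x hx] := hF s; exists (x :: s); rewrite /= hx us ss.
Qed.

Lemma poly_infinite_eq0 (F : fieldType) (P : {poly F}) :
  infinite_field F -> (forall x, P.[x] = 0) -> P = 0.
Proof.
move=> hF hP; apply/eqP/negPn/negP => nzP.
have [s [us ss]] := infinite_field_uniq_seq (size P) hF.
have rootsP : all (root P) s by apply/allP => x _; rewrite /root hP.
by have := max_poly_roots nzP rootsP us; rewrite ss ltnn.
Qed.

Lemma monomial_sum_eq0 (F : fieldType) (T : eqType) (ts : seq T) (c : T -> F)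
    (e : T -> nat) :
  infinite_field F -> uniq ts -> {in ts &, injective e} ->
  (forall x, \sum_(t <- ts) c t * x ^+ e t = 0) -> {in ts, forall t, c t = 0}.
Proof.
move=> hF uts inj_e hsum t0 t0ts.
have P0 : \sum_(t <- ts) c t *: 'X^(e t) = 0.
  apply: poly_infinite_eq0 hF _ => x; rewrite horner_sum.
  by under eq_bigr do rewrite hornerZ hornerXn; apply: hsum.
have := congr1 (fun p : {poly F} => p`_(e t0)) P0.
rewrite coef0 coef_sum (bigD1_seq t0) //= coefZ coefXn eqxx mulr1 big1_seq ?addr0 //.
move=> t /andP[t_neq tts]; rewrite coefZ coefXn.
case: eqP => [/(inj_e _ _ t0ts tts) eq_t|]; last by rewrite mulr0.
by rewrite eq_t eqxx in t_neq.
Qed.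

Local Open Scope nat_scope.

(* The mod-B^(p_0 + 1) residue of the sum is its lowest term. *)
Lemma expn_digits_inj (B K : nat) (p : nat -> nat) (a b : 'I_K -> nat) :
  (forall m, p m < p m.+1) -> (forall i, a i < B) -> (forall i, b i < B) ->
  \sum_(i < K) B ^ p i * a i = \sum_(i < K) B ^ p i * b i -> a =1 b.
Proof.
elim: K p a b => [|K IH] p a b p_incr aB bB; first by move=> _ [].
have B_gt0 : 0 < B by apply: leq_ltn_trans (aB ord0).
have pB_gt0 : 0 < B ^ p 0 by rewrite expn_gt0 B_gt0.
pose high (c : 'I_K.+1 -> nat) := \sum_(i < K) B ^ p i.+1 * c (lift ord0 i).
have high_dvd c : B ^ (p 0).+1 %| high c.
  apply: dvdn_sum => i _; apply/dvdn_mulr/dvdn_exp2l.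
  exact: (homo_ltn ltn_trans p_incr).
have low_mod c : c ord0 < B ->
    (B ^ p 0 * c ord0 + high c) %% B ^ (p 0).+1 = B ^ p 0 * c ord0.
  move=> cB; rewrite -(divnK (high_dvd c)) addnC modnMDl modn_small //.
  by rewrite expnSr ltn_pmul2l.
rewrite !big_ord_recl => eq_sum.
have eq0 : a ord0 = b ord0.
  apply/eqP; rewrite -(eqn_pmul2l pB_gt0) -(low_mod a) // -(low_mod b) //.
  by apply/eqP; congr (_ %% _); exact: eq_sum.
move: eq_sum; rewrite eq0 => /addnI eq_high.
have IHa := IH (fun m => p m.+1) _ _ (fun m => p_incr m.+1)
  (fun i => aB _) (fun i => bB _) eq_high.
by move=> i; case: (unliftP ord0 i) => [j ->|->] //; apply: IHa.
Qed.

Local Open Scope ring_scope.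

Lemma lie_brZl (F : fieldType) (n : nat) (a : F) (A B : 'M[F]_n) :
  lie_br (a *: A) B = a *: lie_br A B.
Proof. by rewrite /lie_br -scalemxAl -scalemxAr scalerBr. Qed.

Lemma lie_br_delta_diag (F : fieldType) (n : nat) (p q : 'I_n) (d : 'rV[F]_n) :
  lie_br (delta_mx p q) (diag_mx d) = (d 0 q - d 0 p) *: delta_mx p q.
Proof.
rewrite /lie_br mul_mx_diag mul_diag_mx; apply/matrixP => i j; rewrite !mxE.
by case: (i =P p) => [->|_]; case: (j =P q) => [->|_];
  rewrite /= ?mulr0 ?mul0r ?subr0 ?mulr1 ?mul1r.
Qed.

Lemma lie_br_delta_delta (F : fieldType) (n : nat) (p q r : 'I_n) :
  r != p -> lie_br (delta_mx p q) (delta_mx q r) = delta_mx p r :> 'M[F]_n.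
Proof.
by move=> r_neq_p; rewrite /lie_br !mul_delta_mx_cond eqxx (negbTE r_neq_p) mulr0n subr0.
Qed.

Lemma delta_mx_homog (F : fieldType) (n g : nat) (p q : 'I_n) :
  q = (p + g)%N :> nat -> homog_deg g (delta_mx p q : 'M[F]_n).
Proof.
move=> qE r c cE; rewrite mxE; case: (r =P p) => [rp|] //=; case: (c =P q) => [cq|] //=.
by rewrite cq rp qE eqxx in cE.
Qed.

Lemma diag_mx_homog0 (F : fieldType) (n : nat) (d : 'rV[F]_n) : homog_deg0 (diag_mx d).
Proof. by move=> r c rc; rewrite mxE (negbTE rc) mulr0n. Qed.

Section DeltaPath.

Variables (F : fieldType) (N : nat) (d : 'rV[F]_N.+1) (pos : nat -> 'I_N.+1).
Hypothesis d0 : d 0 ord0 = 0.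

Lemma foldl_lie_br_diag (T : Type) (s : seq T) (a : F) (q : 'I_N.+1) :
  foldl (@lie_br F N.+1) (a *: delta_mx ord0 q) [seq diag_mx d | _ <- s]
  = (a * d 0 q ^+ size s) *: delta_mx ord0 q.
Proof.
elim: s a => [|_ s IH] a /=; first by rewrite mulr1.
by rewrite lie_brZl lie_br_delta_diag d0 subr0 scalerA IH exprS mulrA.
Qed.

Lemma foldl_lie_br_delta_path (t : nat -> nat) (b : nat) :
  (forall m, (m < b)%N -> pos m.+1 != ord0) ->
  foldl (@lie_br F N.+1) (delta_mx ord0 (pos 0))
    (flatten [seq delta_mx (pos m) (pos m.+1) :: [seq diag_mx d | _ <- iota 0 (t m)]
              | m <- iota 0 b])
  = (\prod_(m < b) d 0 (pos m.+1) ^+ t m) *: delta_mx ord0 (pos b).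
Proof.
elim: b => [|b IH] pos_neq0; first by rewrite big_ord0 scale1r.
have -> : iota 0 b.+1 = iota 0 b ++ [:: b] by rewrite -addn1 iotaD.
rewrite map_cat flatten_cat foldl_cat IH; last by move=> m /ltnW; apply: pos_neq0.
rewrite /= cats0 lie_brZl lie_br_delta_delta ?pos_neq0 // -[delta_mx _ _]scale1r scalerA.
by rewrite foldl_lie_br_diag size_iota big_ord_recr mulr1 scale1r.
Qed.

Lemma comm_eval_delta_path (K : nat) (t : {ffun 'I_K.+1 -> nat}) :
  pos 0 = ord0 -> (forall m, (m <= K)%N -> pos m.+1 != ord0) ->
  comm_eval (fun i : 'I_K.+1 => delta_mx (pos i) (pos i.+1)) (fun=> diag_mx d) t
  = (\prod_(i < K.+1) d 0 (pos i.+1) ^+ t i) *: delta_mx ord0 (pos K.+1).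
Proof.
move=> pos0 pos_neq0.
pose T m := t (inord m).
have wordE : comm_word (fun i : 'I_K.+1 => delta_mx (pos i) (pos i.+1)) (fun=> diag_mx d) t
    = flatten [seq delta_mx (pos m) (pos m.+1) :: [seq diag_mx d | _ <- iota 0 (T m)]
              | m <- iota 0 K.+1].
  rewrite /comm_word -val_enum_ord -map_comp; congr flatten.
  by apply: eq_map => i /=; rewrite /T inord_val.
rewrite /comm_eval wordE.
set word := flatten _.
have -> : lnc word = foldl (@lie_br F N.+1) (delta_mx ord0 (pos 0)) word.
  by rewrite /lnc /= pos0 lie_br_delta_delta ?pos_neq0.
rewrite foldl_lie_br_delta_path; last by move=> m; apply: pos_neq0.
by congr (_ *: _); apply: eq_bigr => i _; rewrite /T inord_val.
Qed.

End DeltaPath.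

Section KroneckerSubstitution.

Variables (F : fieldType) (N K : nat) (g : 'I_K.+1 -> nat).
Hypothesis g_gt0 : forall i, (0 < g i)%N.
Hypothesis sum_g : (\sum_(i < K.+1) g i <= N)%N.

Definition gsum (m : nat) : nat := \sum_(l < m) g (inord l).

Lemma gsumS m : gsum m.+1 = (gsum m + g (inord m))%N.
Proof. by rewrite /gsum big_ord_recr. Qed.

Lemma gsum_incr m : (gsum m < gsum m.+1)%N.
Proof. by rewrite gsumS -[X in (X < _)%N]addn0 ltn_add2l. Qed.

Lemma gsum_le m : (m <= K.+1)%N -> (gsum m <= N)%N.
Proof.
have gsumK : gsum K.+1 = \sum_(i < K.+1) g i.
  by apply: eq_bigr => i _; rewrite inord_val.
move=> mK; rewrite (leq_trans _ sum_g) // -gsumK.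
exact: (homo_leq leqnn leq_trans (fun m => ltnW (gsum_incr m))).
Qed.

Definition gpos (m : nat) : 'I_N.+1 := inord (gsum m).

Lemma gposE m : (m <= K.+1)%N -> gpos m = gsum m :> nat.
Proof. by move=> mK; rewrite inordK // ltnS gsum_le. Qed.

Definition zsub (i : 'I_K.+1) : 'M[F]_N.+1 := delta_mx (gpos i) (gpos i.+1).

Lemma zsub_homog i : homog_deg (g i) (zsub i).
Proof.
by apply: delta_mx_homog; rewrite !gposE ?gsumS ?inord_val // ltnW.
Qed.

(* Entries x ^ (B ^ r) make the exponent of the product a base-B number. *)
Definition kweights (B : nat) (x : F) : 'rV[F]_N.+1 :=
  \row_(r < N.+1) (if r == 0 :> nat then 0 else x ^+ (B ^ r)).

Definition kexp (B : nat) (t : {ffun 'I_K.+1 -> nat}) : nat :=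
  \sum_(i < K.+1) B ^ gsum i.+1 * t i.

Lemma comm_eval_kweights B x t :
  comm_eval zsub (fun=> diag_mx (kweights B x)) t
  = x ^+ kexp B t *: delta_mx ord0 (gpos K.+1).
Proof.
have gpos_neq0 m : (m <= K)%N -> (gpos m.+1 == 0 :> nat) = false.
  by move=> mK; apply/negbTE; rewrite -lt0n gposE // (leq_trans _ (gsum_incr m)).
rewrite comm_eval_delta_path ?mxE //; first last.
- by move=> m /gpos_neq0 /negbT.
- by apply: val_inj; rewrite /= gposE // /gsum big_ord0.
rewrite /kexp -prodrXr; congr (_ *: _); apply: eq_bigr => i _.
by rewrite mxE (gpos_neq0 _ (ltn_ord i)) gposE ?exprM.
Qed.

Lemma kexp_inj B (t t' : {ffun 'I_K.+1 -> nat}) :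
  (forall i, t i < B)%N -> (forall i, t' i < B)%N -> kexp B t = kexp B t' -> t = t'.
Proof.
move=> tB t'B eq_kexp; apply/ffunP.
exact: (expn_digits_inj (p := fun m => gsum m.+1) (fun m => gsum_incr m.+1) tB t'B).
Qed.

End KroneckerSubstitution.

Theorem mainTheorem15 (F : fieldType) (n k : nat) (g : 'I_k -> nat)
  (hF : infinite_field F) (hn : (3 <= n)%N) (hk : (0 < k)%N)
  (hg : forall i, (1 <= g i <= n.-1)%N)
  (hsum : (\sum_(i < k) g i <= n.-1)%N)
  (ts : seq {ffun 'I_k -> nat}) (c : {ffun 'I_k -> nat} -> F)
  (huniq : uniq ts)
  (hid : forall (Z : 'I_k -> 'M[F]_n) (Y : nat -> 'M[F]_n),
      (forall i, homog_deg (g i) (Z i)) -> (forall j, homog_deg0 (Y j)) ->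
      \sum_(t <- ts) c t *: comm_eval Z Y t = 0) :
  forall t, t \in ts -> c t = 0.
Proof.
case: n hn hg hsum hid => [|N] // _ hg hsum hid.
case: k g hk hg hsum ts c huniq hid => [|K] // g _ hg sum_g ts c huniq hid.
have g_gt0 i : (0 < g i)%N by case/andP: (hg i).
pose B := (\max_(t <- ts) \max_(i < K.+1) t i).+1.
have entry_lt_B t i : t \in ts -> (t i < B)%N.
  move=> tts; rewrite ltnS (leq_trans (leq_bigmax i)) //.
  exact: (leq_bigmax_seq (F := fun t : {ffun 'I_K.+1 -> nat} => \max_(i < K.+1) t i)).
apply: (monomial_sum_eq0 (e := kexp g B)) => //.
  by move=> t t' tts t'ts; apply: (kexp_inj g_gt0) => i; apply: entry_lt_B.
move=> x; have := hid _ _ (zsub_homog F g_gt0 sum_g)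
  (fun=> diag_mx_homog0 (kweights N B x)).
move/(congr1 (fun M : 'M[F]_N.+1 => M ord0 (gpos N g K.+1))); rewrite summxE mxE.
apply: etrans; apply: eq_bigr => t _.
by rewrite (comm_eval_kweights g_gt0 sum_g) !mxE !eqxx mulr1.
Qed.
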